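(* Assume, in the setting described in the context, the strengthened saturation assumption: there is a fixed $b_{0,\gamma}\in(0,1)$ and a number $b_{h,\gamma}<b_{0,\gamma}$ such that $$\gamma < b_{h,\gamma}\,|J(u)-J(\tilde u)|.$$ Then the practical error estimator $\eta_h^{(2)}$ satisfies $$\underline{c}_{h,\gamma}|\eta_h^{(2)}| \le |J(u)-J(\tilde u)| \le \overline{c}_{h,\gamma}|\eta_h^{(2)}| \quad\text{and}\quad \underline{c}_{\gamma}|\eta_h^{(2)}| \le |J(u)-J(\tilde u)| \le \overline{c}_{\gamma}|\eta_h^{(2)}|,$$ where $\underline{c}_{h,\gamma}:=1/(1+b_{h,\gamma})$, $\overline{c}_{h,\gamma}:=1/(1-b_{h,\gamma})$, $\underline{c}_{\gamma}:=1/(1+b_{0,\gamma})$ and $\overline{c}_{\gamma}:=1/(1-b_{0,\gamma})$.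
   Context: Let $U$ and $V$ be real Banach spaces with dual $V^*$. Let $\mathcal{A}:U\to V^*$ be a (nonlinear) operator that is three times continuously Fréchet differentiable, and let $J:U\to\mathbb{R}$ be three times continuously Fréchet differentiable. Notation: $\mathcal{A}(w)(v)$ is the value of $\mathcal{A}(w)\in V^*$ at $v\in V$. For fixed $v$, $\mathcal{A}'(w)(\varphi,v)$, $\mathcal{A}''(w)(\varphi,\psi,v)$ and $\mathcal{A}'''(w)(\varphi,\psi,\chi,v)$ denote the first, second and third Fréchet derivatives of $w\mapsto\mathcal{A}(w)(v)$ at $w$ in the directions $\varphi,\psi,\chi\in U$. Analogously, $J'(w)(\varphi)$ and $J'''(w)(\varphi,\psi,\chi)$ denote derivatives of $J$. Let $u\in U$ satisfy $\mathcal{A}(u)(v)=0$ for all $v\in V$, and let $z\in V$ satisfy $\mathcal{A}'(u)(\varphi,z)=J'(u)(\varphi)$ for all $\varphi\in U$. Let $U_h^{(2)}\subset U$ and $V_h^{(2)}\subset V$ be finite-dimensional subspaces. Let $u_h^{(2)}\in U_h^{(2)}$ satisfy $\mathcal{A}(u_h^{(2)})(v)=0$ for all $v\in V_h^{(2)}$. Let $z_h^{(2)}\in V_h^{(2)}$ satisfy $\mathcal{A}'(u_h^{(2)})(\varphi,z_h^{(2)})=J'(u_h^{(2)})(\varphi)$ for all $\varphi\in U_h^{(2)}$. Let $\tilde u\in U_h^{(2)}$ and $\tilde z\in V_h^{(2)}$ be arbitrary fixed elements. Define $\rho(\tilde u)(v):=-\mathcal{A}(\tilde u)(v)$ and $\rho^*(\tilde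 u,\tilde z)(\varphi):=J'(\tilde u)(\varphi)-\mathcal{A}'(\tilde u)(\varphi,\tilde z)$. With $e:=u-\tilde u$ and $e^*:=z-\tilde z$, define $$\mathcal{R}^{(3)}:=\frac12\int_0^1\Big[J'''(\tilde u+se)(e,e,e)-\mathcal{A}'''(\tilde u+se)(e,e,e,\tilde z+se^* )-3\mathcal{A}''(\tilde u+se)(e,e,e^* )\Big]s(s-1)\,ds.$$ Let $\mathcal{R}^{(3)(2)}$ be the same expression with $e,e^*,z$ replaced by $e^{(2)}:=u_h^{(2)}-\tilde u$, $e^{(2),*}:=z_h^{(2)}-\tilde z$, $z_h^{(2)}$. Define $\eta_h^{(2)}:=\tfrac12\rho(\tilde u)(z_h^{(2)}-\tilde z)+\tfrac12\rho^*(\tilde u,\tilde z)(u_h^{(2)}-\tilde u)$ and $$\gamma:=|J(u)-J(u_h^{(2)})|+|\mathcal{R}^{(3)}-\mathcal{R}^{(3)(2)}|+|\rho(\tilde u)(\tilde z)|+|\mathcal{R}^{(3)}|.$$ *)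

From HB Require Import structures.
From mathcomp Require Import all_boot all_order all_algebra.
From mathcomp Require Import all_classical all_reals all_analysis.
Set Implicit Arguments. Unset Strict Implicit. Unset Printing Implicit Defensive.
Import Order.TTheory GRing.Theory Num.Theory.
Import numFieldNormedType.Exports.
Local Open Scope classical_set_scope.
Local Open Scope ring_scope.

(* A map  F : U -> (X -> R)  is a map from U into a space of forms whose   *)
(* arguments are collected in the type X; [nX x] is the product of the     *)
(* norms of the arguments, so  sup_x |f x| / nX x  is the operator norm.   *)
(* The derivative of F is a map DF : U -> (U * X -> R), the new (first)    *)
(* argument being the direction of differentiation.                        *)
Section Forms.
Variables (R : realType) (U : normedModType R).

Definition n_unit (_ : unit) : R := 1.
Definition n_cons (X : Type) (nX : X -> R) (p : U * X) : R := `|p.1| * nX p.2.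

Definition bounded_linear_deriv (X : Type) (nX : X -> R)
    (DF : U * X -> R) : Prop :=
  (forall (a : R) (h k : U) (x : X), DF (a *: h + k, x) = a * DF (h, x) + DF (k, x))
  /\ exists C : R, forall (h : U) (x : X), `|DF (h, x)| <= C * (`|h| * nX x).

Definition is_frechet_deriv (X : Type) (nX : X -> R)
    (F : U -> X -> R) (DF : U -> U * X -> R) : Prop :=
  forall w : U,
    bounded_linear_deriv nX (DF w) /\
    forall eps : R, 0 < eps -> exists2 del : R, 0 < del &
      forall h : U, `|h| < del -> forall x : X,
        `|F (w + h) x - F w x - DF w (h, x)| <= eps * `|h| * nX x.

Definition op_continuous (X : Type) (nX : X -> R) (F : U -> X -> R) : Prop :=
  forall w : U, forall eps : R, 0 < eps -> exists2 del : R, 0 < del &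
    forall h : U, `|h| < del -> forall x : X,
      `|F (w + h) x - F w x| <= eps * nX x.

End Forms.

Notation args1 U X := (U * X)%type.
Notation args2 U X := (U * (U * X))%type.
Notation args3 U X := (U * (U * (U * X)))%type.

Section Setting.
Variables (R : realType) (U : normedModType R) (V : normedModType R).

Definition nV0 (v : V) : R := `|v|.
Definition nV1 := n_cons (U := U) nV0.
Definition nV2 := n_cons (U := U) nV1.
Definition nJ1 := n_cons (U := U) (n_unit R).
Definition nJ2 := n_cons (U := U) nJ1.

Definition C3_functional (J : U -> R) (J1 : U -> args1 U unit -> R)
    (J2 : U -> args2 U unit -> R) (J3 : U -> args3 U unit -> R) : Prop :=
  [/\ is_frechet_deriv (n_unit R) (fun w (_ : unit) => J w) J1,
      is_frechet_deriv nJ1 J1 J2,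
      is_frechet_deriv nJ2 J2 J3 &
      op_continuous (n_cons nJ2) J3].

(* A : U -> V^* (A w is a bounded linear functional on V) is three times
   continuously Fréchet differentiable, with derivatives A1 A2 A3;
   A k w (phi_1, .., (phi_k, v)) = A^(k)(w)(phi_1, .., phi_k, v). *)
Definition C3_operator (A : U -> V -> R) (A1 : U -> args1 U V -> R)
    (A2 : U -> args2 U V -> R) (A3 : U -> args3 U V -> R) : Prop :=
  [/\ forall w : U,
        (forall (a : R) (v v' : V), A w (a *: v + v') = a * A w v + A w v')
        /\ exists C : R, forall v : V, `|A w v| <= C * `|v|,
      is_frechet_deriv nV0 A A1,
      is_frechet_deriv nV1 A1 A2,
      is_frechet_deriv nV2 A2 A3 &
      op_continuous (n_cons nV2) A3].

Definition fin_dim_subspace (W : normedModType R) (S : set W) : Prop :=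
  [/\ S 0,
      (forall (a : R) (x y : W), S x -> S y -> S (a *: x + y)) &
      exists (n : nat) (b : 'I_n -> W),
        (forall i, S (b i)) /\
        forall x, S x -> exists c : 'I_n -> R, x = \sum_(i < n) c i *: b i].

Definition rho (A : U -> V -> R) (ut : U) (v : V) : R := - A ut v.
Definition rho_star (J1 : U -> args1 U unit -> R) (A1 : U -> args1 U V -> R)
    (ut : U) (zt : V) (phi : U) : R := J1 ut (phi, tt) - A1 ut (phi, zt).

Definition remainder3 (J3 : U -> args3 U unit -> R) (A2 : U -> args2 U V -> R)
    (A3 : U -> args3 U V -> R) (ut : U) (zt : V) (e : U) (e' : V) : R :=
  2^-1 * \int[@lebesgue_measure R]_(s in `[0%R, 1%R])
    ((J3 (ut + s *: e) (e, (e, (e, tt)))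
      - A3 (ut + s *: e) (e, (e, (e, zt + s *: e')))
      - 3 * A2 (ut + s *: e) (e, (e, e'))) * (s * (s - 1))).

End Setting.

From HB Require Import structures.
From mathcomp Require Import all_boot all_order all_algebra.
From mathcomp Require Import all_classical all_reals all_analysis.
From mathcomp Require Import ring lra.
Set Implicit Arguments. Unset Strict Implicit. Unset Printing Implicit Defensive.
Import Order.TTheory GRing.Theory Num.Theory.
Import numFieldNormedType.Exports.
Local Open Scope classical_set_scope.
Local Open Scope ring_scope.

(* With e = uh - ut and e' = zh - zt, restrict the Lagrangian
   L(w, v) = J(w) - A(w)(v) to the segment s |-> (ut + s e, zt + s e') and
   apply the trapezoidal rule with its cubic remainder on [0, 1]: the
   remainder is R3h, the derivative at s = 0 is rho(ut)(e') + rho*(ut,zt)(e),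
   i.e. 2 eta, the one at s = 1 vanishes by Galerkin orthogonality, and
   L(ut, zt) = J(ut) + rho(ut)(zt), L(uh, zh) = J(uh). Hence
   J(u) - J(ut) = eta + d with |d| <= gamma, and the saturation assumption
   |d| <= bh |J(u) - J(ut)| turns the triangle inequality into the two-sided
   bounds. *)

Section RealDerivatives.
Variable R : realType.
Implicit Types (f g : R -> R) (x df dg : R).

(* The library rules conclude about [f + g], [f * g], ... as functions, which
   does not unify with explicit lambda terms; these forms do. *)

Lemma is_derive_ptD f g x df dg : is_derive x 1 f df -> is_derive x 1 g dg ->
  is_derive x 1 (fun t => f t + g t) (df + dg).
Proof. exact: is_deriveD. Qed.

Lemma is_derive_ptB f g x df dg : is_derive x 1 f df -> is_derive x 1 g dg ->
  is_derive x 1 (fun t => f t - g t) (df - dg).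
Proof. exact: is_deriveB. Qed.

Lemma is_derive_ptM f g x df dg : is_derive x 1 f df -> is_derive x 1 g dg ->
  is_derive x 1 (fun t => f t * g t) (f x * dg + g x * df).
Proof. exact: is_deriveM. Qed.

Lemma is_derive_ptZ (k : R) f x df : is_derive x 1 f df ->
  is_derive x 1 (fun t => k * f t) (k * df).
Proof. exact: is_deriveZ. Qed.

Lemma is_derive_continuous f x df : is_derive x 1 f df -> {for x, continuous f}.
Proof.
by move=> fx; apply: differentiable_continuous; apply/derivable1_diffP.
Qed.

Lemma trapezoid_remainder (f f1 f2 f3 : R -> R) :
  (forall s : R, is_derive s 1 f (f1 s)) ->
  (forall s : R, is_derive s 1 f1 (f2 s)) ->
  (forall s : R, is_derive s 1 f2 (f3 s)) -> continuous f3 ->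
  f 1 - f 0 = 2^-1 * (f1 0 + f1 1) +
    2^-1 * \int[@lebesgue_measure R]_(s in `[0%R, 1%R]) (f3 s * (s * (s - 1))).
Proof.
move=> df df1 df2 cf3.
(* A primitive of the integrand, found by integrating by parts twice. *)
pose G s := f2 s * (s * (s - 1)) - f1 s * (2 * s - 1) + 2 * f s.
have dG (s : R) : is_derive s 1 G (f3 s * (s * (s - 1))).
  have ds : is_derive s 1 (fun t : R => t) 1 := is_derive_id s 1.
  have dc (c : R) : is_derive s 1 (fun _ : R => c) 0 := is_derive_cst c s 1.
  have dp := is_derive_ptM ds (is_derive_ptB ds (dc 1)).
  have dq := is_derive_ptB (is_derive_ptZ 2 ds) (dc 1).
  have := is_derive_ptD (is_derive_ptB (is_derive_ptM (df2 s) dp)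
    (is_derive_ptM (df1 s) dq)) (is_derive_ptZ 2 (df s)).
  by move/is_derive_eq; apply; ring.
have cg : continuous (fun s => f3 s * (s * (s - 1))).
  by move=> s; apply: cvgM; [exact: cf3 | apply: cvgM; [|apply: cvgB]];
    [exact: cvg_id | exact: cvg_id | exact: cvg_cst].
rewrite /Rintegral
  (@continuous_FTC2 _ _ G 0 1 ltr01 (continuous_subspaceT cg)) /=.
- by rewrite /G; field.
- split.
  + by move=> s _; exact: (@ex_derive _ _ _ _ _ _ _ (dG s)).
  + exact/cvg_at_right_filter/(is_derive_continuous (dG 0)).
  + exact/cvg_at_left_filter/(is_derive_continuous (dG 1)).
- by move=> s _; rewrite derive1E (@derive_val _ _ _ _ _ _ _ (dG s)).
Qed.

End RealDerivatives.

Section FrechetAlongLines.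
Variables (R : realType) (U : normedModType R).

Lemma bounded_linear_derivZ (X : Type) (nX : X -> R) (DF : U * X -> R) a h x :
  bounded_linear_deriv nX DF -> DF (a *: h, x) = a * DF (h, x).
Proof.
move=> [lin _]; have DF0 : DF (0, x) = 0.
  by have := lin 1 0 0 x; rewrite scale1r addr0 mul1r; lra.
by have := lin a h 0 x; rewrite addr0 DF0 addr0.
Qed.

Lemma frechet_line_derive (X : Type) (nX : X -> R) (F : U -> X -> R)
    (DF : U -> U * X -> R) (p q : U) (x : X) (s : R) :
  is_frechet_deriv nX F DF ->
  is_derive s 1 (fun t : R => F (p + t *: q) x) (DF (p + s *: q) (q, x)).
Proof.
move=> HF; have [DFlin Hrem] := HF (p + s *: q).
set w := p + s *: q; set f := fun t : R => F (p + t *: q) x.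
suff cv : (fun h : R => h^-1 *: ((f \o shift s) (h *: 1) - f s)) @ 0^' -->
    DF w (q, x).
  by apply: DeriveDef; [exact: cvgP cv | exact: cvg_lim cv].
apply/cvgrPdist_le => eps eps0.
set K := `|q| * `|nX x|.
have K0 : 0 <= K by rewrite mulr_ge0.
have eps'0 : 0 < eps / (K + 1) by rewrite divr_gt0 // ltr_wpDl.
have [del del0 Hdel] := Hrem _ eps'0.
near=> h.
have hn0 : h != 0 by near: h; exact: nbhs_dnbhs_neq.
have hq : `|h *: q| < del.
  have hlt : `|h| < del / (`|q| + 1).
    by near: h; apply: dnbhs0_lt; rewrite divr_gt0 // ltr_wpDl.
  rewrite normrZ (le_lt_trans _ (_ : `|h| * (`|q| + 1) < del)) //.
    by rewrite ler_wpM2l // lerDl.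
  by rewrite -ltr_pdivlMr ?ltr_wpDl.
have -> : (f \o shift s) (h *: 1) = F (w + h *: q) x.
  by rewrite /f /= /w scaler1 scalerDl addrA [X in F X](addrAC p).
have -> : DF w (q, x) - h^-1 *: (F (w + h *: q) x - f s)
    = - h^-1 * (F (w + h *: q) x - F w x - DF w (h *: q, x)).
  rewrite (bounded_linear_derivZ _ _ _ DFlin) -[_ *: (_ - _)]/(_ * _) /f -/w.
  by field.
rewrite normrM normrN normrV ?unitfE // ler_pdivrMl ?normr_gt0 //.
apply: (le_trans (Hdel _ hq x)); rewrite normrZ.
apply: (@le_trans _ _ (eps / (K + 1) * `|h| * K)).
  rewrite mulrA -[leLHS]mulrA; apply: ler_wpM2l.
    by rewrite mulr_ge0 // ltW // divr_gt0 // ltr_wpDl.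
  by apply: ler_wpM2l => //; exact: ler_norm.
rewrite mulrAC [X in _ <= X]mulrC ler_wpM2r // -mulrA ger_pMr //.
by rewrite mulrC ler_pdivrMr ?ltr_wpDl // mul1r lerDl.
Unshelve. all: end_near.
Qed.

Lemma op_continuous_line (X : Type) (nX : X -> R) (F : U -> X -> R)
    (p q : U) (x : X) :
  op_continuous nX F -> continuous (fun t : R => F (p + t *: q) x).
Proof.
move=> HF s; apply/cvgrPdist_le => eps eps0.
have eps'0 : 0 < eps / (`|nX x| + 1) by rewrite divr_gt0 // ltr_wpDl.
have [del del0 Hdel] := HF (p + s *: q) _ eps'0.
near=> t.
have ht : `|s - t| < del / (`|q| + 1).
  near: t; apply: cvgr_dist_lt; first exact: cvg_id.
  by rewrite divr_gt0 // ltr_wpDl.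
have hq : `|(t - s) *: q| < del.
  rewrite normrZ distrC (le_lt_trans _ (_ : `|s - t| * (`|q| + 1) < del)) //.
    by rewrite ler_wpM2l // lerDl.
  by rewrite -ltr_pdivlMr ?ltr_wpDl.
have -> : p + t *: q = p + s *: q + (t - s) *: q.
  by rewrite -addrA -scalerDl (addrC s) subrK.
rewrite distrC; apply: (le_trans (Hdel _ hq x)).
rewrite mulrAC ler_pdivrMr ?ltr_wpDl // ler_wpM2l ?ltW //.
by rewrite (le_lt_trans (ler_norm _)) // ltrDl.
Unshelve. all: end_near.
Qed.

Lemma frechet_deriv_linear (X : Type) (nX : X -> R) (F : U -> X -> R)
    (DF : U -> U * X -> R) (y y1 y2 : X) (a : R) :
  is_frechet_deriv nX F DF -> (forall w, F w y = a * F w y1 + F w y2) ->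
  forall w h, DF w (h, y) = a * DF w (h, y1) + DF w (h, y2).
Proof.
move=> HF Fy w h.
have Fline : (fun t : R => F (w + t *: h) y) =
    a \*: (fun t => F (w + t *: h) y1) + (fun t => F (w + t *: h) y2).
  by apply/funext => t; rewrite Fy.
have := frechet_line_derive w h y 0 HF; rewrite Fline => dy.
have dy' := is_deriveD (is_deriveZ a (frechet_line_derive w h y1 0 HF))
  (frechet_line_derive w h y2 0 HF).
have := etrans (esym (@derive_val _ _ _ _ _ _ _ dy))
  (@derive_val _ _ _ _ _ _ _ dy').
by rewrite scale0r addr0.
Qed.

Lemma frechet_line_derive_affine (X : Type) (nX : X -> R) (F : U -> X -> R)
    (DF : U -> U * X -> R) (p q : U) (c : R -> X) (x1 x0 : X) (s : R) :
  is_frechet_deriv nX F DF -> (forall w t, F w (c t) = t * F w x1 + F w x0) ->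
  is_derive s 1 (fun t => F (p + t *: q) (c t))
    (DF (p + s *: q) (q, c s) + F (p + s *: q) x1).
Proof.
move=> HF Fc; rewrite (frechet_deriv_linear HF (Fc^~ s)).
have -> : (fun t => F (p + t *: q) (c t)) =
    (fun t => t * F (p + t *: q) x1 + F (p + t *: q) x0).
  by apply/funext => t; rewrite Fc.
have dt : is_derive s 1 (fun t : R => t) 1 := is_derive_id s 1.
have := is_derive_ptD (is_derive_ptM dt (frechet_line_derive p q x1 s HF))
  (frechet_line_derive p q x0 s HF).
by move/is_derive_eq; apply; ring.
Qed.

End FrechetAlongLines.

Section ErrorRepresentation.
Variables (R : realType) (U V : normedModType R).
Variables (A : U -> V -> R) (A1 : U -> U * V -> R) (A2 : U -> U * (U * V) -> R).
Variable A3 : U -> U * (U * (U * V)) -> R.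
Variables (J : U -> R) (J1 : U -> U * unit -> R).
Variables (J2 : U -> U * (U * unit) -> R) (J3 : U -> U * (U * (U * unit)) -> R).
Hypotheses (HA : C3_operator A A1 A2 A3) (HJ : C3_functional J J1 J2 J3).

Lemma C3_operator_linear w a v v' : A w (a *: v + v') = a * A w v + A w v'.
Proof. by case: HA => /(_ w) [lin _]. Qed.

Lemma C3_operator_linear1 w h a v v' :
  A1 w (h, a *: v + v') = a * A1 w (h, v) + A1 w (h, v').
Proof.
case: HA => _ dA _ _ _.
exact: (frechet_deriv_linear dA (fun w => C3_operator_linear w a v v')).
Qed.

Lemma C3_operator_linear2 w k h a v v' :
  A2 w (k, (h, a *: v + v')) = a * A2 w (k, (h, v)) + A2 w (k, (h, v')).
Proof.
case: HA => _ _ dA1 _ _.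
exact: (frechet_deriv_linear dA1 (fun w => C3_operator_linear1 w h a v v')).
Qed.

Lemma C3_operator_linear3 w l k h a v v' :
  A3 w (l, (k, (h, a *: v + v'))) =
  a * A3 w (l, (k, (h, v))) + A3 w (l, (k, (h, v'))).
Proof.
case: HA => _ _ _ dA2 _.
exact: (frechet_deriv_linear dA2 (fun w => C3_operator_linear2 w k h a v v')).
Qed.

Lemma remainder3_integrand_continuous (ut e : U) (zt e' : V) :
  continuous (fun s : R => J3 (ut + s *: e) (e, (e, (e, tt)))
    - A3 (ut + s *: e) (e, (e, (e, zt + s *: e')))
    - 3 * A2 (ut + s *: e) (e, (e, e'))).
Proof.
case: HA => _ _ _ dA2 cA3; case: HJ => _ _ _ cJ3.
under eq_fun => s do rewrite (addrC zt) C3_operator_linear3.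
move=> s; apply: cvgB; [apply: cvgB|apply: cvgM; [exact: cvg_cst|]].
- exact: (op_continuous_line (p := ut) (q := e) (x := (e, (e, (e, tt)))) cJ3).
- apply: cvgD; [apply: cvgM; [exact: cvg_id|]|].
  + exact: (op_continuous_line (p := ut) (q := e) (x := (e, (e, (e, e')))) cA3).
  + exact: (op_continuous_line (p := ut) (q := e) (x := (e, (e, (e, zt)))) cA3).
- exact: is_derive_continuous (frechet_line_derive ut e (e, (e, e')) s dA2).
Qed.

Lemma error_representation (ut uh : U) (zt zh : V) :
  A uh zh = 0 -> A uh (zh - zt) = 0 ->
  A1 uh (uh - ut, zh) = J1 uh (uh - ut, tt) ->
  J uh - J ut = 2^-1 * rho A ut (zh - zt)
    + 2^-1 * rho_star J1 A1 ut zt (uh - ut) + rho A ut zt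
    + remainder3 J3 A2 A3 ut zt (uh - ut) (zh - zt).
Proof.
move=> Azh Ae' Galerkin.
case: HA => _ dA dA1 dA2 _; case: HJ => dJ dJ1 dJ2 _.
set e := uh - ut; set e' := zh - zt.
pose x := fun s : R => ut + s *: e; pose y := fun s : R => zt + s *: e'.
have Ay w t : A w (y t) = t * A w e' + A w zt.
  by rewrite /y addrC C3_operator_linear.
have A1y w t : A1 w (e, y t) = t * A1 w (e, e') + A1 w (e, zt).
  by rewrite /y addrC C3_operator_linear1.
have A2y w t : A2 w (e, (e, y t)) = t * A2 w (e, (e, e')) + A2 w (e, (e, zt)).
  by rewrite /y addrC C3_operator_linear2.
pose f s := J (x s) - A (x s) (y s).
pose f1 s := J1 (x s) (e, tt) - A1 (x s) (e, y s) - A (x s) e'.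
pose f2 s := J2 (x s) (e, (e, tt)) - A2 (x s) (e, (e, y s))
  - 2 * A1 (x s) (e, e').
pose f3 s := J3 (x s) (e, (e, (e, tt))) - A3 (x s) (e, (e, (e, y s)))
  - 3 * A2 (x s) (e, (e, e')).
have df (s : R) : is_derive s 1 f (f1 s).
  have := is_derive_ptB (frechet_line_derive ut e tt s dJ)
    (frechet_line_derive_affine ut e s dA Ay).
  by move/is_derive_eq; apply; rewrite /f1; ring.
have df1 (s : R) : is_derive s 1 f1 (f2 s).
  have := is_derive_ptB (is_derive_ptB (frechet_line_derive ut e (e, tt) s dJ1)
    (frechet_line_derive_affine ut e s dA1 A1y))
    (frechet_line_derive ut e e' s dA).
  by move/is_derive_eq; apply; rewrite /f2; ring.
have df2 (s : R) : is_derive s 1 f2 (f3 s).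
  have := is_derive_ptB (is_derive_ptB
    (frechet_line_derive ut e (e, (e, tt)) s dJ2)
    (frechet_line_derive_affine ut e s dA2 A2y))
    (is_derive_ptZ 2 (frechet_line_derive ut e (e, e') s dA1)).
  by move/is_derive_eq; apply; rewrite /f3; ring.
have cf3 : continuous f3 := @remainder3_integrand_continuous ut e zt e'.
have -> : remainder3 J3 A2 A3 ut zt e e' =
    2^-1 * \int[@lebesgue_measure R]_(s in `[0%R, 1%R]) (f3 s * (s * (s - 1))).
  by [].
have := trapezoid_remainder df df1 df2 cf3.
have x0 : x 0 = ut by rewrite /x scale0r addr0.
have x1 : x 1 = uh by rewrite /x scale1r /e addrC subrK.
have y0 : y 0 = zt by rewrite /y scale0r addr0.
have y1 : y 1 = zh by rewrite /y scale1r /e' addrC subrK.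
rewrite /f /f1 x0 x1 y0 y1 Azh Ae' -Galerkin /rho /rho_star.
lra.
Qed.

End ErrorRepresentation.

Lemma effectivity_bounds (R : realFieldType) (b eta d : R) :
  0 <= b < 1 -> `|d| <= b * `|eta + d| ->
  (1 + b)^-1 * `|eta| <= `|eta + d| <= (1 - b)^-1 * `|eta|.
Proof.
move=> /andP[b_ge0 b_lt1] d_small.
have eta_le : `|eta| <= `|eta + d| + `|d|.
  by have := ler_normB (eta + d) d; rewrite addrK.
have etad_le : `|eta + d| <= `|eta| + `|d| := ler_normD eta d.
apply/andP; split.
- by rewrite ler_pdivrMl ?ltr_wpDr //; lra.
- by rewrite ler_pdivlMl ?subr_gt0 //; lra.
Qed.

Lemma ler_norm_perturbed_sum (R : realFieldType) (a b r rh : R) :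
  `|a + b + rh| <= `|a| + `|r - rh| + `|b| + `|r|.
Proof.
have := ler_normD (a + b) rh; have := ler_normD a b.
have := ler_normB r (r - rh); rewrite opprB addrC subrK.
lra.
Qed.

Theorem mainTheorem2 (R : realType)
  (U V : completeNormedModType R)
  (A : U -> V -> R) (A1 : U -> U * V -> R) (A2 : U -> U * (U * V) -> R)
  (A3 : U -> U * (U * (U * V)) -> R)
  (J : U -> R) (J1 : U -> U * unit -> R) (J2 : U -> U * (U * unit) -> R)
  (J3 : U -> U * (U * (U * unit)) -> R)
  (HA : C3_operator A A1 A2 A3) (HJ : C3_functional J J1 J2 J3)
  (u : U) (z : V)
  (Hu : forall v : V, A u v = 0)
  (Hz : forall phi : U, A1 u (phi, z) = J1 u (phi, tt))
  (Uh : set U) (Vh : set V)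
  (HUh : fin_dim_subspace Uh) (HVh : fin_dim_subspace Vh)
  (uh : U) (zh : V) (Huh_in : Uh uh) (Hzh_in : Vh zh)
  (Huh : forall v : V, Vh v -> A uh v = 0)
  (Hzh : forall phi : U, Uh phi -> A1 uh (phi, zh) = J1 uh (phi, tt))
  (ut : U) (zt : V) (Hut : Uh ut) (Hzt : Vh zt)
  (b0 bh : R) (Hb0 : 0 < b0 < 1) (Hbh : bh < b0) :
  let R3 := remainder3 J3 A2 A3 ut zt (u - ut) (z - zt) in
  let R3h := remainder3 J3 A2 A3 ut zt (uh - ut) (zh - zt) in
  let eta := 2^-1 * rho A ut (zh - zt) + 2^-1 * rho_star J1 A1 ut zt (uh - ut) in
  let gamma := `|J u - J uh| + `|R3 - R3h| + `|rho A ut zt| + `|R3| in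
  gamma < bh * `|J u - J ut| ->
  ((1 + bh)^-1 * `|eta| <= `|J u - J ut| <= (1 - bh)^-1 * `|eta|) /\
  ((1 + b0)^-1 * `|eta| <= `|J u - J ut| <= (1 - b0)^-1 * `|eta|).
Proof.
move=> R3 R3h eta gamma saturation.
have [_ UhD _] := HUh; have [_ VhD _] := HVh.
have Uh_e : Uh (uh - ut) by rewrite addrC -scaleN1r; exact: UhD.
have Vh_e : Vh (zh - zt) by rewrite addrC -scaleN1r; exact: VhD.
have rep := error_representation HA HJ (Huh _ Hzh_in) (Huh _ Vh_e) (Hzh _ Uh_e).
set d := J u - J ut - eta.
have Jd : J u - J ut = eta + d by rewrite /d (addrC eta) subrK.
have d_gamma : `|d| <= gamma.
  have -> : d = (J u - J uh) + rho A ut zt + R3h by rewrite /d /eta /R3h; lra.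
  exact: ler_norm_perturbed_sum.
have bh_ge0 : 0 <= bh.
  have gamma_ge0 : 0 <= gamma by rewrite !addr_ge0.
  rewrite leNgt; apply/negP => /ltW bh_le0.
  have := lt_le_trans saturation (mulr_le0_ge0 bh_le0 (normr_ge0 _)).
  by rewrite ltNge gamma_ge0.
have d_bh : `|d| <= bh * `|eta + d| by rewrite -Jd; lra.
rewrite Jd; split; apply: effectivity_bounds.
- by rewrite bh_ge0 /=; case/andP: Hb0 => _; exact: lt_trans Hbh.
- exact: d_bh.
- by case/andP: Hb0 => /ltW -> ->.
- exact: le_trans d_bh (ler_wpM2r (normr_ge0 _) (ltW Hbh)).
Qed.
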